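(* Let $n\ge3$, $m_1,\dots,m_n>0$, and let $\varphi_1,\dots,\varphi_n$ be the longitudes of a fixed-point configuration of the masses on the equator. Let $H,G$ be the $n\times n$ matrices with entries (for $i\ne j$) $H_{ij}=\frac{m_im_j}{\sin^3d_{ij}}$, $H_{ii}=-\sum_{j\neq i}H_{ij}\cos d_{ij}$, $G_{ij}=\frac{-2m_im_j\cos d_{ij}}{\sin^3 d_{ij}}$, $G_{ii}=-\sum_{j\neq i}G_{ij}$, and let $v_1,v_2,v_3\in\mathbb R^n$ have entries $(v_1)_i=\cos d_{1i}=\cos(\varphi_i-\varphi_1)$, $(v_2)_i=\sin(\varphi_i-\varphi_1)$, $(v_3)_i=1$ (with $d_{11}=0$). Then $Hv_1=0$, $Hv_2=0$ and $Gv_3=0$.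
   Context: Masses lie on the equator of the unit sphere at longitudes $\varphi_i$, with geodesic distances $d_{ij}\in(0,\pi)$ for $i\ne j$ (on the equator $\cos d_{ij}=\cos(\varphi_i-\varphi_j)$). The force function is $V=\sum_{i<j}m_im_j\cot d_{ij}$, and a fixed point is a critical point of $V$ on the configuration space $\{d_{ij}\notin\{0,\pi\}\}\subset(\mathbb S^2)^n$. (The matrices $H$ and $G$ are the Hessians of $V$ with respect to the colatitudes $\theta_i$ and to the longitudes $\varphi_i$ at the configuration.) *)

From Stdlib Require Import Reals Lra List.
From Coquelicot Require Import Coquelicot.
Open Scope R_scope.

(* Finite sum over indices 0 .. n-1 (masses are indexed 0 .. n-1). *)
Definition rsum (n : nat) (f : nat -> R) : R :=
  fold_right Rplus 0 (map f (seq 0 n)).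

Definition cot (x : R) : R := cos x / sin x.

Definition upd (f : nat -> R) (k : nat) (t : R) : nat -> R :=
  fun i => if Nat.eqb i k then t else f i.

(* Cosine of the geodesic distance between points of the unit sphere given
   in spherical coordinates (colatitude th, longitude ph). *)
Definition cosdist (th ph : nat -> R) (i j : nat) : R :=
  cos (th i) * cos (th j) + sin (th i) * sin (th j) * cos (ph i - ph j).

Definition dist (th ph : nat -> R) (i j : nat) : R := acos (cosdist th ph i j).

Definition Vforce (n : nat) (m th ph : nat -> R) : R :=
  rsum n (fun j => rsum j (fun i => m i * m j * cot (dist th ph i j))).

Definition in_config (n : nat) (th ph : nat -> R) : Prop :=
  forall i j, (i < n)%nat -> (j < n)%nat -> i <> j ->
    0 < dist th ph i j < PI.

Definition fixed_point (n : nat) (m th ph : nat -> R) : Prop :=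
  in_config n th ph /\
  forall k, (k < n)%nat ->
    is_derive (fun t => Vforce n m (upd th k t) ph) (th k) 0 /\
    is_derive (fun t => Vforce n m th (upd ph k t)) (ph k) 0.

Definition equator : nat -> R := fun _ => PI / 2.

Definition deq (ph : nat -> R) (i j : nat) : R := acos (cos (ph i - ph j)).

Definition Hoff (m ph : nat -> R) (i j : nat) : R :=
  m i * m j / (sin (deq ph i j)) ^ 3.
Definition Hmat (n : nat) (m ph : nat -> R) (i j : nat) : R :=
  if Nat.eqb i j then
    - rsum n (fun k => if Nat.eqb k i then 0 else Hoff m ph i k * cos (deq ph i k))
  else Hoff m ph i j.

Definition Goff (m ph : nat -> R) (i j : nat) : R :=
  -2 * m i * m j * cos (deq ph i j) / (sin (deq ph i j)) ^ 3.
Definition Gmat (n : nat) (m ph : nat -> R) (i j : nat) : R :=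
  if Nat.eqb i j then
    - rsum n (fun k => if Nat.eqb k i then 0 else Goff m ph i k)
  else Goff m ph i j.

(* Vectors v1, v2, v3 (index 0 plays the role of mass 1). *)
Definition v1 (ph : nat -> R) (i : nat) : R := cos (deq ph 0%nat i).
Definition v2 (ph : nat -> R) (i : nat) : R := sin (ph i - ph 0%nat).
Definition v3 (i : nat) : R := 1.

Definition mulv (n : nat) (M : nat -> nat -> R) (v : nat -> R) (i : nat) : R :=
  rsum n (fun j => M i j * v j).

(* On the equator the longitude equations of a fixed point read
   sum_(j <> i) H_ij sin (ph_j - ph_i) = 0 for every i.  Row i of H applied to v gives
   sum_(j <> i) H_ij (v_j - cos d_ij v_i), and for any v_j = a cos ph_j + b sin ph_j the
   bracket equals (b cos ph_i - a sin ph_i) sin (ph_j - ph_i); v1 and v2 are of this form.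
   G has zero row sums, so it kills constants. *)

From Pilot Require Import Defs.
From Stdlib Require Import Reals Lra Lia List.
From Coquelicot Require Import Coquelicot.
Open Scope R_scope.

Lemma rsum_S n f : rsum (S n) f = rsum n f + f n.
Proof.
  unfold rsum. rewrite seq_S, map_app, fold_right_app. simpl.
  induction (map f (seq 0 n)) as [|a l IH]; simpl; [ring | rewrite IH; ring].
Qed.

Lemma rsum_ext n f g : (forall j, (j < n)%nat -> f j = g j) -> rsum n f = rsum n g.
Proof.
  induction n as [|n IH]; intros Hfg; [reflexivity|].
  rewrite !rsum_S, IH, Hfg; [reflexivity | lia | intros j Hj; apply Hfg; lia].
Qed.

Lemma rsum_const0 n : rsum n (fun _ => 0) = 0.
Proof. induction n as [|n IH]; [reflexivity|]. rewrite rsum_S, IH. ring. Qed.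

Lemma rsum_plus n f g : rsum n (fun j => f j + g j) = rsum n f + rsum n g.
Proof. induction n as [|n IH]; [unfold rsum; simpl; ring|]. rewrite !rsum_S, IH. ring. Qed.

Lemma rsum_mult_l n c f : rsum n (fun j => c * f j) = c * rsum n f.
Proof. induction n as [|n IH]; [unfold rsum; simpl; ring|]. rewrite !rsum_S, IH. ring. Qed.

Lemma rsum_eqb n k g :
  rsum n (fun j => if Nat.eqb j k then g j else 0) = if Nat.ltb k n then g k else 0.
Proof.
  induction n as [|n IH]; [reflexivity|]. rewrite rsum_S, IH.
  destruct (Nat.eqb_spec n k), (Nat.ltb_spec k n), (Nat.ltb_spec k (S n));
    subst; try lia; ring.
Qed.

Lemma rsum_split_at n i f : (i < n)%nat ->
  rsum n f = f i + rsum n (fun j => if Nat.eqb j i then 0 else f j).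
Proof.
  intros Hi.
  transitivity (rsum n (fun j => (if Nat.eqb j i then f j else 0) +
                                 (if Nat.eqb j i then 0 else f j))).
  - apply rsum_ext. intros j _. destruct (Nat.eqb j i); ring.
  - rewrite rsum_plus, rsum_eqb. apply Nat.ltb_lt in Hi. rewrite Hi. reflexivity.
Qed.

Lemma is_derive_rsum n (f : nat -> R -> R) x df :
  (forall j, (j < n)%nat -> is_derive (f j) x (df j)) ->
  is_derive (fun t => rsum n (fun j => f j t)) x (rsum n df).
Proof.
  induction n as [|n IH]; intros Hf.
  - apply (is_derive_const 0 x).
  - apply is_derive_ext with (f := fun t => rsum n (fun j => f j t) + f n t).
    { intros t. rewrite rsum_S. reflexivity. }
    rewrite rsum_S.
    apply (is_derive_plus (fun t => rsum n (fun j => f j t)) (f n)).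
    + apply IH. intros j Hj. apply Hf. lia.
    + apply Hf. lia.
Qed.

Lemma rsum_upper_pairs_at n k g : (k < n)%nat ->
  rsum n (fun j => rsum j (fun i =>
    (if Nat.eqb i k then g j else 0) + (if Nat.eqb j k then g i else 0)))
  = rsum n (fun j => if Nat.eqb j k then 0 else g j).
Proof.
  intros Hk.
  (* Over the first p rows the pairs (i, k) with k >= p are still missing. *)
  enough (Hgen : forall p, rsum p (fun j => rsum j (fun i =>
      (if Nat.eqb i k then g j else 0) + (if Nat.eqb j k then g i else 0)))
      + (if Nat.leb p k then rsum p g else 0)
      = rsum p (fun j => if Nat.eqb j k then 0 else g j)).
  { rewrite <- Hgen, (proj2 (Nat.leb_gt n k) Hk). ring. }
  induction p as [|p IH]; [unfold rsum; simpl; ring|].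
  rewrite !rsum_S, <- IH, rsum_plus, (rsum_eqb p k (fun _ => g p)).
  destruct (Nat.eqb_spec p k) as [->|Hpk].
  - rewrite Nat.leb_refl, (proj2 (Nat.ltb_ge k k)), (proj2 (Nat.leb_gt (S k) k)) by lia.
    change (rsum k (fun j => g j)) with (rsum k g). ring.
  - rewrite rsum_const0.
    destruct (Nat.ltb_spec k p), (Nat.leb_spec (S p) k), (Nat.leb_spec p k);
      try lia; ring.
Qed.

Lemma is_derive_cot_acos_cos x : 0 < sin (acos (cos x)) ->
  is_derive (fun t => cot (acos (cos t))) x (- sin x / sin (acos (cos x)) ^ 3).
Proof.
  intros Hpos.
  rewrite sin_acos in * by apply COS_bound.
  apply is_derive_ext with (f := fun t => cos t / sqrt (1 - cos t ^ 2)).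
  { intros t. unfold cot. rewrite cos_acos, sin_acos by apply COS_bound.
    unfold Rsqr. do 3 f_equal. ring. }
  replace (1 - (cos x)²) with (1 - cos x ^ 2) in * by (unfold Rsqr; ring).
  assert (Hrad : 0 < 1 - cos x ^ 2).
  { destruct (Rle_or_lt (1 - cos x ^ 2) 0) as [Hle|]; [|assumption].
    rewrite sqrt_neg_0 in Hpos by assumption. lra. }
  set (s := sqrt (1 - cos x ^ 2)) in *.
  assert (Hss : s * s = 1 - cos x ^ 2) by (apply sqrt_sqrt; lra).
  auto_derive.
  all: replace (1 + - (cos x * (cos x * 1))) with (s * s) by (rewrite Hss; ring).
  all: rewrite ?sqrt_square by lra.
  - repeat split; nra.
  - apply Rminus_diag_uniq. field_simplify; [|lra..].
    replace (s ^ 2) with (s * s) by ring. rewrite Hss. field. lra.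
Qed.

Lemma dist_equator ph i j : Defs.dist equator ph i j = acos (cos (ph i - ph j)).
Proof. unfold Defs.dist, cosdist, equator. rewrite cos_PI2, sin_PI2. f_equal. ring. Qed.

Lemma cos_minus_sym a b : cos (a - b) = cos (b - a).
Proof. rewrite <- cos_neg. f_equal. ring. Qed.

Section LongitudeDerivative.

Variables (n : nat) (m ph : nat -> R) (k : nat).
Hypothesis Hconfig : in_config n equator ph.

(* [pair_slope j] is the derivative of [m k m j cot d_kj] with respect to [ph k]. *)
Definition pair_slope (j : nat) : R := Hoff m ph k j * sin (ph j - ph k).

Lemma sin_deq_pos i j : (i < n)%nat -> (j < n)%nat -> i <> j ->
  0 < sin (acos (cos (ph i - ph j))).
Proof.
  intros Hi Hj Hij. rewrite <- dist_equator. apply sin_gt_0; apply Hconfig; assumption.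
Qed.

Lemma is_derive_pair_term i j : (i < j)%nat -> (j < n)%nat ->
  is_derive (fun t => m i * m j * cot (Defs.dist equator (upd ph k t) i j)) (ph k)
    ((if Nat.eqb i k then pair_slope j else 0) +
     (if Nat.eqb j k then pair_slope i else 0)).
Proof.
  intros Hij Hj.
  apply is_derive_ext with
    (f := fun t => m i * m j * cot (acos (cos (upd ph k t i - upd ph k t j)))).
  { intros t. rewrite dist_equator. reflexivity. }
  unfold upd, pair_slope, Hoff, deq.
  destruct (Nat.eqb_spec i k) as [->|Hik], (Nat.eqb_spec j k) as [->|Hjk]; try lia.
  - replace (m k * m j / sin (acos (cos (ph k - ph j))) ^ 3 * sin (ph j - ph k) + 0)
      with (m k * m j * (1 * (- sin (ph k - ph j) / sin (acos (cos (ph k - ph j))) ^ 3)))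
      by (rewrite <- (Ropp_minus_distr (ph k) (ph j)), sin_neg; field;
          apply Rgt_not_eq, sin_deq_pos; lia).
    apply (is_derive_scal (fun t => cot (acos (cos (t - ph j))))).
    apply (is_derive_comp (fun x => cot (acos (cos x))) (fun t => t - ph j)).
    + apply is_derive_cot_acos_cos, sin_deq_pos; lia.
    + auto_derive; [exact I | ring].
  - rewrite (cos_minus_sym (ph k)).
    replace (0 + m k * m i / sin (acos (cos (ph i - ph k))) ^ 3 * sin (ph i - ph k))
      with (m i * m k * (-1 * (- sin (ph i - ph k) / sin (acos (cos (ph i - ph k))) ^ 3)))
      by (field; apply Rgt_not_eq, sin_deq_pos; lia).
    apply (is_derive_scal (fun t => cot (acos (cos (ph i - t))))).
    apply (is_derive_comp (fun x => cot (acos (cos x))) (fun t => ph i - t)).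
    + apply is_derive_cot_acos_cos, sin_deq_pos; lia.
    + auto_derive; [exact I | ring].
  - rewrite Rplus_0_r. apply (is_derive_const (m i * m j * _)).
Qed.

Lemma is_derive_Vforce_longitude : (k < n)%nat ->
  is_derive (fun t => Vforce n m equator (upd ph k t)) (ph k)
    (rsum n (fun j => if Nat.eqb j k then 0 else pair_slope j)).
Proof.
  intros Hk. unfold Vforce. rewrite <- rsum_upper_pairs_at by exact Hk.
  apply is_derive_rsum. intros j Hj.
  apply is_derive_rsum. intros i Hi.
  apply is_derive_pair_term; lia.
Qed.

End LongitudeDerivative.

Lemma fixed_point_equator_balance n m ph k :
  fixed_point n m equator ph -> (k < n)%nat ->
  rsum n (fun j => if Nat.eqb j k then 0 else pair_slope m ph k j) = 0.
Proof.
  intros [Hconfig Hcrit] Hk.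
  rewrite <- (is_derive_unique _ _ _ (is_derive_Vforce_longitude n m ph k Hconfig Hk)).
  exact (is_derive_unique _ _ _ (proj2 (Hcrit k Hk))).
Qed.

Lemma mulv_laplacian n M (A w v : nat -> R) i : (i < n)%nat ->
  M i i = - rsum n (fun j => if Nat.eqb j i then 0 else A j * w j) ->
  (forall j, j <> i -> M i j = A j) ->
  mulv n M v i = rsum n (fun j => if Nat.eqb j i then 0 else A j * (v j - w j * v i)).
Proof.
  intros Hi Hdiag Hoffdiag. unfold mulv.
  rewrite (rsum_split_at n i) by exact Hi.
  rewrite (rsum_ext n _ (fun j => if Nat.eqb j i then 0 else A j * v j)).
  2:{ intros j _. destruct (Nat.eqb_spec j i); [reflexivity | rewrite Hoffdiag; auto]. }
  transitivity (rsum n (fun j =>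
    (if Nat.eqb j i then 0 else A j * v j) + - v i * (if Nat.eqb j i then 0 else A j * w j))).
  - rewrite rsum_plus, rsum_mult_l, Hdiag. ring.
  - apply rsum_ext. intros j _. destruct (Nat.eqb j i); ring.
Qed.

Lemma harmonic_defect a b x y :
  a * cos y + b * sin y - cos (x - y) * (a * cos x + b * sin x)
  = (b * cos x - a * sin x) * sin (y - x).
Proof.
  rewrite cos_minus, sin_minus.
  transitivity ((b * cos x - a * sin x) * (sin y * cos x - cos y * sin x)
                + (a * cos y + b * sin y) * (1 - ((sin x)² + (cos x)²)));
    [unfold Rsqr; ring |].
  rewrite sin2_cos2. ring.
Qed.

Lemma mulv_Hmat_harmonic n m ph (v : nat -> R) a b i :
  fixed_point n m equator ph -> (i < n)%nat ->
  (forall j, (j < n)%nat -> v j = a * cos (ph j) + b * sin (ph j)) ->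
  mulv n (Hmat n m ph) v i = 0.
Proof.
  intros Hfix Hi Hv.
  rewrite (mulv_laplacian n _ (Hoff m ph i) (fun j => cos (deq ph i j))); unfold Hmat.
  2: assumption.
  2: rewrite Nat.eqb_refl; reflexivity.
  2:{ intros j Hji. apply Nat.eqb_neq in Hji. rewrite Nat.eqb_sym, Hji. reflexivity. }
  transitivity ((b * cos (ph i) - a * sin (ph i)) *
                rsum n (fun j => if Nat.eqb j i then 0 else pair_slope m ph i j)).
  - rewrite <- rsum_mult_l. apply rsum_ext. intros j Hj.
    destruct (Nat.eqb j i); [ring|].
    unfold pair_slope, deq. rewrite cos_acos by apply COS_bound.
    rewrite (Hv j Hj), (Hv i Hi), harmonic_defect. ring.
  - rewrite fixed_point_equator_balance by assumption. ring.
Qed.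

Lemma mulv_Gmat_const n m ph c i : (i < n)%nat ->
  mulv n (Gmat n m ph) (fun _ => c) i = 0.
Proof.
  intros Hi.
  rewrite (mulv_laplacian n _ (Goff m ph i) (fun _ => 1)); unfold Gmat.
  2: assumption.
  2:{ rewrite Nat.eqb_refl. f_equal. apply rsum_ext. intros j _.
      destruct (Nat.eqb j i); ring. }
  2:{ intros j Hji. apply Nat.eqb_neq in Hji. rewrite Nat.eqb_sym, Hji. reflexivity. }
  transitivity (rsum n (fun _ => 0)); [|apply rsum_const0].
  apply rsum_ext. intros j _. destruct (Nat.eqb j i); ring.
Qed.

Theorem lemma3 (n : nat) (m ph : nat -> R) :
  (3 <= n)%nat ->
  (forall i, (i < n)%nat -> 0 < m i) ->
  fixed_point n m equator ph ->
  forall i, (i < n)%nat ->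
    mulv n (Hmat n m ph) (v1 ph) i = 0 /\
    mulv n (Hmat n m ph) (v2 ph) i = 0 /\
    mulv n (Gmat n m ph) v3 i = 0.
Proof.
  intros _ _ Hfix i Hi. split; [|split].
  - apply (mulv_Hmat_harmonic n m ph _ (cos (ph 0%nat)) (sin (ph 0%nat)) i Hfix Hi).
    intros j _. unfold v1, deq. rewrite cos_acos by apply COS_bound.
    rewrite cos_minus. ring.
  - apply (mulv_Hmat_harmonic n m ph _ (- sin (ph 0%nat)) (cos (ph 0%nat)) i Hfix Hi).
    intros j _. unfold v2. rewrite sin_minus. ring.
  - exact (mulv_Gmat_const n m ph 1 i Hi).
Qed.
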